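(* Let $\alpha\in\mathbb R$ and let $(\phi,\psi)$ be a $q\times q$ Stieltjes pair. Then there is a discrete subset $\mathcal D$ of $\mathbb C\setminus[\alpha,\infty)$ satisfying conditions (i), (ii), (iii) of the definition of a Stieltjes pair and additionally: (iv) $\frac1{\operatorname{Im}z}\operatorname{Im}[\psi(z)^*\phi(z)]$ is positive semidefinite for each $z\in\mathbb C\setminus(\mathbb R\cup\mathcal D)$; (v) $\frac1{\operatorname{Im}z}\operatorname{Im}[(z-\alpha)\psi(z)^*\phi(z)]$ is positive semidefinite for each $z\in\mathbb C\setminus(\mathbb R\cup\mathcal D)$; (vi) $\operatorname{Re}[\psi(z)^*\phi(z)]$ is positive semidefinite for each $z\in\{w\in\mathbb C:\operatorname{Re}w<\alpha\}\setminus\mathcal D$.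
   Context: For a square matrix $A$, $\operatorname{Re}A:=\frac12(A+A^* )$, $\operatorname{Im}A:=\frac1{2i}(A-A^* )$. $J_q:=\begin{pmatrix}0&-iI_q\\ iI_q&0\end{pmatrix}$. A pair $(\phi,\psi)$ of $q\times q$ matrix-valued functions meromorphic in $\mathbb C\setminus[\alpha,\infty)$ is a $q\times q$ Stieltjes pair if there is a discrete subset $\mathcal D$ of $\mathbb C\setminus[\alpha,\infty)$ such that: (i) $\phi,\psi$ are holomorphic in $\mathbb C\setminus([\alpha,\infty)\cup\mathcal D)$; (ii) $\operatorname{rank}\begin{pmatrix}\phi(z)\\\psi(z)\end{pmatrix}=q$ there; (iii) for each $z\in\mathbb C\setminus(\mathbb R\cup\mathcal D)$, $\begin{pmatrix}\phi(z)\\\psi(z)\end{pmatrix}^*\frac{-J_q}{2\operatorname{Im}z}\begin{pmatrix}\phi(z)\\\psi(z)\end{pmatrix}$ and $\begin{pmatrix}(z-\alpha)\phi(z)\\\psi(z)\end{pmatrix}^*\frac{-J_q}{2\operatorname{Im}z}\begin{pmatrix}(z-\alpha)\phi(z)\\\psi(z)\end{pmatrix}$ are positive semidefinite. *)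

From HB Require Import structures.
From mathcomp Require Import all_boot all_order all_algebra.
From mathcomp Require Import complex.
From mathcomp Require Import reals.
Set Implicit Arguments. Unset Strict Implicit. Unset Printing Implicit Defensive.
Import Order.TTheory GRing.Theory Num.Theory.
Local Open Scope ring_scope.
Local Open Scope complex_scope.

Section Defs.
Variable R : realType.
Local Notation C := R[i].

Definition adjmx m n (A : 'M[C]_(m, n)) : 'M[C]_(n, m) := (map_mx (@conjc R) A)^T.

Definition mxRe n (A : 'M[C]_n) : 'M[C]_n := (2%:R)^-1 *: (A + adjmx A).
Definition mxIm n (A : 'M[C]_n) : 'M[C]_n := (2%:R * 'i)^-1 *: (A - adjmx A).

(* positive semidefinite: v^* A v >= 0 for all v (order of the num field C:
   nonnegative real) *)
Definition psd n (A : 'M[C]_n) : Prop :=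
  forall v : 'cV[C]_n, 0 <= (adjmx v *m A *m v) 0 0.

Definition Jq q : 'M[C]_(q + q) :=
  block_mx 0 (- 'i *: 1%:M) ('i *: 1%:M) 0.

Definition slit_dom (alpha : R) (z : C) : Prop :=
  ~ (complex.Im z = 0 /\ alpha <= complex.Re z).

Definition discrete_in (U D : C -> Prop) : Prop :=
  (forall z, D z -> U z) /\
  (forall z, U z -> exists r : R, 0 < r /\
     forall w, D w -> `|w - z| < r%:C -> w = z).

Definition cderivable (g : C -> C) (z : C) : Prop :=
  exists l : C, forall e : R, 0 < e -> exists d : R, 0 < d /\
    forall h : C, 0 < `|h| -> `|h| < d%:C ->
      `|(g (z + h) - g z) / h - l| < e%:C.

Definition holomorphic_on m n (U : C -> Prop) (f : C -> 'M[C]_(m, n)) : Prop :=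
  forall z, U z -> forall i j, cderivable (fun w => f w i j) z.

Definition pole_at m n (f : C -> 'M[C]_(m, n)) (p : C) : Prop :=
  exists (k : nat) (g : C -> 'M[C]_(m, n)) (r : R), 0 < r /\
    holomorphic_on (fun z => `|z - p| < r%:C) g /\
    forall z, 0 < `|z - p| -> `|z - p| < r%:C -> g z = (z - p) ^+ k *: f z.

Definition meromorphic_on m n (U : C -> Prop) (f : C -> 'M[C]_(m, n)) : Prop :=
  exists P : C -> Prop, discrete_in U P /\
    holomorphic_on (fun z => U z /\ ~ P z) f /\
    forall p, P p -> pole_at f p.

Definition stieltjes_conds q (alpha : R) (phi psi : C -> 'M[C]_q)
    (D : C -> Prop) : Prop :=
  discrete_in (slit_dom alpha) D /\
  (* (i) *)
  holomorphic_on (fun z => slit_dom alpha z /\ ~ D z) phi /\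
  holomorphic_on (fun z => slit_dom alpha z /\ ~ D z) psi /\
  (* (ii) *)
  (forall z, slit_dom alpha z -> ~ D z -> \rank (col_mx (phi z) (psi z)) = q) /\
  (* (iii) *)
  (forall z, complex.Im z != 0 -> ~ D z ->
     psd (adjmx (col_mx (phi z) (psi z)) *m
            ((2%:R * (complex.Im z)%:C)^-1 *: - Jq q) *m col_mx (phi z) (psi z)) /\
     psd (adjmx (col_mx ((z - alpha%:C) *: phi z) (psi z)) *m
            ((2%:R * (complex.Im z)%:C)^-1 *: - Jq q) *m
            col_mx ((z - alpha%:C) *: phi z) (psi z))).

Definition stieltjes_pair q (alpha : R) (phi psi : C -> 'M[C]_q) : Prop :=
  meromorphic_on (slit_dom alpha) phi /\ meromorphic_on (slit_dom alpha) psi /\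
  exists D, stieltjes_conds alpha phi psi D.

End Defs.

(* (iv) and (v) are (iii) in disguise: the (-J_q)-form of [col_mx A B] is
   [2 Im (B^* A)], so dividing it by [2 Im z] gives [(Im z)^-1 Im (B^* A)], with
   [A = phi z], resp. [A = (z - alpha) phi z].  For nonreal [z] with [Re z < alpha]
   and [m = v^* psi(z)^* phi(z) v] we have
   [Im ((z - alpha) m) = (Re z - alpha) Im m + Im z Re m], so (iv) and (v) force
   [Re m >= 0], which is (vi).  A real [z < alpha] outside [D] is a limit of the
   nonreal points [z + i t], [t > 0], which avoid [D] for small [t] since [D] is
   discrete; [phi] and [psi] are holomorphic, hence continuous, at [z], and
   [Re m >= 0] passes to the limit. *)

From HB Require Import structures.
From mathcomp Require Import all_boot all_order all_algebra.
From mathcomp Require Import complex.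
From mathcomp Require Import reals.
From mathcomp Require Import ring lra.
Import Order.TTheory GRing.Theory Num.Theory.
Local Open Scope ring_scope.
Local Open Scope complex_scope.
Import Normc.
Set Implicit Arguments. Unset Strict Implicit.

Section Continuity.
Variable R : realType.
Local Notation C := R[i].

Lemma normc_ge0 (x : C) : 0 <= normc x.
Proof. by case: x => a b; apply: sqrtr_ge0. Qed.

Lemma Re_le_normc (x : C) : complex.Re x <= normc x.
Proof.
case: x => a b /=; apply: le_trans (ler_norm a) _; rewrite -sqrtr_sqr.
by apply: ler_wsqrtr; rewrite lerDl sqr_ge0.
Qed.

Lemma normc_vertical (x t : R) : 0 <= t -> normc ((x +i* t) - x%:C) = t.
Proof. by move=> t_ge0; rewrite /= subrr subr0 expr0n add0r sqrtr_sqr ger0_norm. Qed.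

Lemma normC_normc (x : C) : `|x| = (normc x)%:C.
Proof. by []. Qed.

Definition ccontinuous_at (g : C -> C) (z : C) : Prop :=
  forall e : R, 0 < e -> exists2 d : R, 0 < d &
    forall w, normc (w - z) < d -> normc (g w - g z) < e.

Lemma eq_ccontinuous_at f g z :
  (forall w, f w = g w) -> ccontinuous_at f z -> ccontinuous_at g z.
Proof.
by move=> fg cf e /cf[d d_gt0 cf']; exists d => // w; rewrite -!fg; apply: cf'.
Qed.

Lemma ccontinuous_cst (c z : C) : ccontinuous_at (fun=> c) z.
Proof. by move=> e e_gt0; exists 1 => // w _; rewrite subrr normc0. Qed.

Lemma ccontinuous_conj f z : ccontinuous_at f z -> ccontinuous_at (fun w => (f w)^*) z.
Proof.
move=> cf e /cf[d d_gt0 cf']; exists d => // w /cf'.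
by rewrite -rmorphB; case: (f w - f z) => a b /=; rewrite sqrrN.
Qed.

Lemma ccontinuousD f g z : ccontinuous_at f z -> ccontinuous_at g z ->
  ccontinuous_at (fun w => f w + g w) z.
Proof.
move=> cf cg e e_gt0; have e2_gt0 : 0 < e / 2%:R by rewrite divr_gt0.
have [d1 d1_gt0 cf'] := cf _ e2_gt0; have [d2 d2_gt0 cg'] := cg _ e2_gt0.
exists (Num.min d1 d2) => [|w]; first by rewrite lt_min d1_gt0.
rewrite lt_min => /andP[/cf' fw /cg' gw].
rewrite opprD addrACA; apply: le_lt_trans (le_normcD _ _) _; lra.
Qed.

Lemma ccontinuousM f g z : ccontinuous_at f z -> ccontinuous_at g z ->
  ccontinuous_at (fun w => f w * g w) z.
Proof.
move=> cf cg e e_gt0.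
have nf := normc_ge0 (f z); have ng := normc_ge0 (g z).
pose M := 1 + normc (f z) + normc (g z).
have M_gt0 : 0 < M by rewrite /M; lra.
pose e' := Num.min 1 (e / M).
have e'_gt0 : 0 < e' by rewrite lt_min ltr01 divr_gt0.
have e'_le1 : e' <= 1 by rewrite ge_min lexx.
have e'M_le : e' * M <= e by rewrite -ler_pdivlMr // ge_min lexx orbT.
have [d1 d1_gt0 cf'] := cf _ e'_gt0; have [d2 d2_gt0 cg'] := cg _ e'_gt0.
exists (Num.min d1 d2) => [|w]; first by rewrite lt_min d1_gt0.
rewrite lt_min => /andP[/cf' fw /cg' gw].
have -> : f w * g w - f z * g z =
  (f w - f z) * (g w - g z) + f z * (g w - g z) + (f w - f z) * g z by ring.
apply: le_lt_trans (le_normcD _ _) _; rewrite !normcM.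
have := le_normcD ((f w - f z) * (g w - g z)) (f z * (g w - g z)); rewrite !normcM.
have := normc_ge0 (f w - f z); have := normc_ge0 (g w - g z).
rewrite /M in e'M_le; nra.
Qed.

Lemma ccontinuous_sum (I : finType) (F : I -> C -> C) z :
  (forall k, ccontinuous_at (F k) z) -> ccontinuous_at (fun w => \sum_k F k w) z.
Proof.
move=> cF; rewrite unlock; elim: (index_enum I) => [|k s IHs] /=.
  exact: ccontinuous_cst.
exact: ccontinuousD.
Qed.

Lemma cderivable_continuous g z : cderivable g z -> ccontinuous_at g z.
Proof.
move=> [l dgl] e e_gt0.
have [d [d_gt0 dg1]] := dgl 1 ltr01.
have L_gt0 : 0 < normc l + 1 by have := normc_ge0 l; lra.
exists (Num.min d (e / (normc l + 1))) => [|w]; first by rewrite lt_min d_gt0 divr_gt0.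
rewrite lt_min => /andP[wd we].
have [->|wz_neq0] := eqVneq w z; first by rewrite subrr normc0.
have h_gt0 : 0 < normc (w - z).
  rewrite lt_def normc_ge0 andbT; apply: contra_neq wz_neq0 => /eq0_normc.
  by move/eqP; rewrite subr_eq0 => /eqP.
have := dg1 (w - z); rewrite !normC_normc !ltcR => /(_ h_gt0 wd).
rewrite [z + _]addrC subrK => q_lt1.
have -> : g w - g z = (w - z) * ((g w - g z) / (w - z) - l) + (w - z) * l.
  by rewrite mulrBr addrNK mulrC divfK // subr_eq0.
apply: le_lt_trans (le_normcD _ _) _; rewrite !normcM.
have := normc_ge0 (w - z); rewrite ltr_pdivlMr // in we; nra.
Qed.

Definition mx_continuous_at m n (f : C -> 'M[C]_(m, n)) (z : C) : Prop :=
  forall i j, ccontinuous_at (fun w => f w i j) z.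

Lemma mx_continuous_cst m n (A : 'M[C]_(m, n)) z : mx_continuous_at (fun=> A) z.
Proof. by move=> i j; apply: ccontinuous_cst. Qed.

Lemma mx_continuous_mulmx m n p (A : C -> 'M[C]_(m, n)) (B : C -> 'M[C]_(n, p)) z :
  mx_continuous_at A z -> mx_continuous_at B z ->
  mx_continuous_at (fun w => A w *m B w) z.
Proof.
move=> cA cB i j.
apply: (@eq_ccontinuous_at (fun w => \sum_k A w i k * B w k j)).
  by move=> w; rewrite mxE.
by apply: ccontinuous_sum => k; apply: ccontinuousM.
Qed.

Lemma mx_continuous_adjmx m n (A : C -> 'M[C]_(m, n)) z :
  mx_continuous_at A z -> mx_continuous_at (fun w => adjmx (A w)) z.
Proof.
move=> cA i j; apply: (@eq_ccontinuous_at (fun w => (A w j i)^*)).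
  by move=> w; rewrite !mxE.
exact: ccontinuous_conj.
Qed.

Lemma holomorphic_on_continuous m n (U : C -> Prop) (f : C -> 'M[C]_(m, n)) z :
  holomorphic_on U f -> U z -> mx_continuous_at f z.
Proof. by move=> hf Uz i j; apply: cderivable_continuous; apply: hf. Qed.

Lemma Re_ge0_of_limit g z : ccontinuous_at g z ->
  (forall d, 0 < d -> exists2 w, normc (w - z) < d & 0 <= complex.Re (g w)) ->
  0 <= complex.Re (g z).
Proof.
move=> cg approx; rewrite leNgt; apply/negP; rewrite -oppr_gt0 => /cg[d d_gt0 cg'].
have [w /cg' gw_near Regw_ge0] := approx d d_gt0.
have := Re_le_normc (g w - g z); rewrite raddfB /=; lra.
Qed.

Lemma discrete_in_punctured (U D : C -> Prop) z : discrete_in U D -> U z ->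
  exists2 r : R, 0 < r & forall w, 0 < normc (w - z) < r -> ~ D w.
Proof.
move=> [_ isolated] /isolated[r [r_gt0 Dr]]; exists r => // w /andP[wz_gt0 wz_lt_r] Dw.
move: wz_gt0; have := Dr w Dw; rewrite normC_normc ltcR => /(_ wz_lt_r) ->.
by rewrite subrr normc0 ltxx.
Qed.

End Continuity.

Section QuadraticForms.
Variable R : realType.
Local Notation C := R[i].

Lemma adjmx_mul m n p (A : 'M[C]_(m, n)) (B : 'M[C]_(n, p)) :
  adjmx (A *m B) = adjmx B *m adjmx A.
Proof. by rewrite /adjmx map_mxM trmx_mul. Qed.

Lemma adjmxK m n (A : 'M[C]_(m, n)) : adjmx (adjmx A) = A.
Proof. by apply/matrixP => i j; rewrite !mxE conjcK. Qed.

Lemma adjmx_col_mx m1 m2 n (A : 'M[C]_(m1, n)) (B : 'M[C]_(m2, n)) :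
  adjmx (col_mx A B) = row_mx (adjmx A) (adjmx B).
Proof. by rewrite /adjmx map_col_mx tr_col_mx. Qed.

Definition qform n (v : 'cV[C]_n) (K : 'M[C]_n) : C := (adjmx v *m K *m v) 0 0.

Lemma eq_psd n (K1 K2 : 'M[C]_n) :
  (forall v : 'cV[C]_n, qform v K1 = qform v K2) -> psd K1 -> psd K2.
Proof. by move=> eqK psdK v; have := psdK v; rewrite -/(qform v K1) eqK. Qed.

Lemma qformD n (v : 'cV[C]_n) (K1 K2 : 'M[C]_n) :
  qform v (K1 + K2) = qform v K1 + qform v K2.
Proof. by rewrite /qform mulmxDr mulmxDl mxE. Qed.

Lemma qformB n (v : 'cV[C]_n) (K1 K2 : 'M[C]_n) :
  qform v (K1 - K2) = qform v K1 - qform v K2.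
Proof. by rewrite /qform mulmxBr mulmxBl !mxE. Qed.

Lemma qformZ n (v : 'cV[C]_n) c (K : 'M[C]_n) : qform v (c *: K) = c * qform v K.
Proof. by rewrite /qform -scalemxAr -scalemxAl mxE. Qed.

Lemma qform_adjmx n (v : 'cV[C]_n) (K : 'M[C]_n) :
  qform v (adjmx K) = (qform v K)^*.
Proof.
rewrite /qform -[v in adjmx v *m _ *m v]adjmxK -!adjmx_mul mulmxA.
by rewrite adjmxK [in LHS]/adjmx !mxE.
Qed.

Lemma qform_mulmx m n (v : 'cV[C]_n) (X : 'M[C]_(m, n)) K :
  qform v (adjmx X *m K *m X) = qform (X *m v) K.
Proof. by rewrite /qform adjmx_mul !mulmxA. Qed.

Lemma qform_mxRe n (v : 'cV[C]_n) (K : 'M[C]_n) :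
  qform v (mxRe K) = (complex.Re (qform v K))%:C.
Proof. by rewrite /mxRe qformZ qformD qform_adjmx addcJ mulKf ?pnatr_eq0. Qed.

Lemma qform_mxIm n (v : 'cV[C]_n) (K : 'M[C]_n) :
  qform v (mxIm K) = (complex.Im (qform v K))%:C.
Proof.
rewrite /mxIm qformZ qformB qform_adjmx subcJ.
have i_neq0 : 'i != 0 :> C by rewrite eq_complex /= oner_eq0 andbF.
by rewrite [_ * _ * 'i]mulrAC mulKf // mulf_neq0 ?pnatr_eq0.
Qed.

Lemma qform_Jq q (a b : 'cV[C]_q) :
  qform (col_mx a b) (- Jq R q) = 2%:R * (complex.Im ((adjmx b *m a) 0 0))%:C.
Proof.
have -> : - Jq R q = block_mx 0 ('i *: 1%:M) (- 'i *: 1%:M) 0.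
  by rewrite /Jq -scaleN1r scale_block_mx !scaler0 !scalerA !mulN1r opprK.
rewrite /qform adjmx_col_mx mul_row_block !mulmx0 add0r addr0 mul_row_col.
rewrite -!scalemxAr !mulmx1 -!scalemxAl.
have -> : adjmx a *m b = adjmx (adjmx b *m a) by rewrite adjmx_mul adjmxK.
move: (adjmx b *m a) => M; rewrite !mxE; move: (M 0 0) => s.
by rewrite mulNr addrC -mulrBr -opprB mulrN subcJ mulrCA -expr2 sqr_i mulrN1 opprK.
Qed.

Lemma qform_Jq_mxIm q (y : R) (A B : 'M[C]_q) (v : 'cV[C]_q) :
  qform v (adjmx (col_mx A B) *m ((2%:R * y%:C)^-1 *: - Jq R q) *m col_mx A B) =
  qform v (y%:C^-1 *: mxIm (adjmx B *m A)).
Proof.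
rewrite qform_mulmx qformZ mul_col_mx qform_Jq qformZ qform_mxIm.
rewrite /qform adjmx_mul !mulmxA invfM -mulrA [y%:C^-1 * _]mulrCA.
by rewrite mulKf ?pnatr_eq0.
Qed.

Lemma Im_mul_subr (z m : C) (a : R) :
  complex.Im ((z - a%:C) * m) =
    (complex.Re z - a) * complex.Im m + complex.Im z * complex.Re m.
Proof. by case: z m => x y [p r]; simpc. Qed.

Lemma Re_ge0_of_Im (m z : C) (alpha : R) :
  complex.Im z != 0 -> complex.Re z < alpha ->
  0 <= (complex.Im z)^-1 * complex.Im m ->
  0 <= (complex.Im z)^-1 * complex.Im ((z - alpha%:C) * m) ->
  0 <= complex.Re m.
Proof.
rewrite Im_mul_subr; move: (complex.Re z) (complex.Im z) => x y y_neq0 x_lt_alpha.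
set w := y^-1 * complex.Im m => w_ge0.
have -> : y^-1 * ((x - alpha) * complex.Im m + y * complex.Re m) =
          (x - alpha) * w + complex.Re m by rewrite /w; field.
nra.
Qed.

Lemma qform_scale_mxIm n (v : 'cV[C]_n) (y : R) (K : 'M[C]_n) :
  qform v (y%:C^-1 *: mxIm K) = (y^-1 * complex.Im (qform v K))%:C.
Proof. by rewrite qformZ qform_mxIm -fmorphV rmorphM. Qed.

Lemma psd_mxRe_of_mxIm n (K : 'M[C]_n) (z : C) (alpha : R) :
  complex.Im z != 0 -> complex.Re z < alpha ->
  psd ((complex.Im z)%:C^-1 *: mxIm K) ->
  psd ((complex.Im z)%:C^-1 *: mxIm ((z - alpha%:C) *: K)) ->
  psd (mxRe K).
Proof.
move=> Imz_neq0 Rez_lt_alpha psdK psdzK v.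
have hK : 0 <= qform v ((complex.Im z)%:C^-1 *: mxIm K) := psdK v.
have hzK : 0 <= qform v ((complex.Im z)%:C^-1 *: mxIm ((z - alpha%:C) *: K)) :=
  psdzK v.
rewrite qform_scale_mxIm ler0c in hK.
rewrite qform_scale_mxIm qformZ ler0c in hzK.
rewrite -[_ 0 0]/(qform v (mxRe K)) qform_mxRe ler0c.
exact: (Re_ge0_of_Im Imz_neq0 Rez_lt_alpha).
Qed.

Lemma psd_mxRe_of_limit n (K : C -> 'M[C]_n) z : mx_continuous_at K z ->
  (forall d, 0 < d -> exists2 w, normc (w - z) < d & psd (mxRe (K w))) ->
  psd (mxRe (K z)).
Proof.
move=> cK approx v; rewrite -[_ 0 0]/(qform v (mxRe (K z))) qform_mxRe ler0c.
apply: (Re_ge0_of_limit (g := fun w => qform v (K w))).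
  have cvK := mx_continuous_mulmx (mx_continuous_cst (adjmx v) z) cK.
  exact: (mx_continuous_mulmx cvK (mx_continuous_cst v z)).
move=> d /approx[w wz_lt_d psdKw]; exists w => //.
by have := psdKw v; rewrite -[_ 0 0]/(qform v (mxRe (K w))) qform_mxRe ler0c.
Qed.

End QuadraticForms.

Section StieltjesPair.
Variables (R : realType) (alpha : R) (q : nat) (phi psi : R[i] -> 'M[R[i]]_q).
Variable D : R[i] -> Prop.
Hypothesis conds : stieltjes_conds alpha phi psi D.

Lemma stieltjes_mxIm_psd z : complex.Im z != 0 -> ~ D z ->
  psd ((complex.Im z)%:C^-1 *: mxIm (adjmx (psi z) *m phi z)).
Proof.
move=> Imz_neq0 Dz; have [psdJ _] := conds.2.2.2.2 z Imz_neq0 Dz.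
by apply: eq_psd psdJ => v; rewrite qform_Jq_mxIm.
Qed.

Lemma stieltjes_shifted_mxIm_psd z : complex.Im z != 0 -> ~ D z ->
  psd ((complex.Im z)%:C^-1 *: mxIm ((z - alpha%:C) *: (adjmx (psi z) *m phi z))).
Proof.
move=> Imz_neq0 Dz; have [_ psdJ] := conds.2.2.2.2 z Imz_neq0 Dz.
by apply: eq_psd psdJ => v; rewrite qform_Jq_mxIm scalemxAr.
Qed.

Lemma stieltjes_mxRe_psd_offaxis z :
  complex.Im z != 0 -> complex.Re z < alpha -> ~ D z ->
  psd (mxRe (adjmx (psi z) *m phi z)).
Proof.
move=> Imz_neq0 Rez_lt_alpha Dz.
apply: (psd_mxRe_of_mxIm Imz_neq0 Rez_lt_alpha).
  exact: stieltjes_mxIm_psd.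
exact: stieltjes_shifted_mxIm_psd.
Qed.

Lemma stieltjes_mxRe_psd z : complex.Re z < alpha -> ~ D z ->
  psd (mxRe (adjmx (psi z) *m phi z)).
Proof.
move=> Rez_lt_alpha Dz.
have [Imz0|Imz_neq0] := eqVneq (complex.Im z) 0; last exact: stieltjes_mxRe_psd_offaxis.
have [discD [holo_phi [holo_psi _]]] := conds.
have slit_z : slit_dom alpha z by case=> _; rewrite leNgt Rez_lt_alpha.
have [r r_gt0 noD] := discrete_in_punctured discD slit_z.
apply: (psd_mxRe_of_limit (K := fun w => adjmx (psi w) *m phi w)).
  have regular_z : slit_dom alpha z /\ ~ D z by [].
  apply: mx_continuous_mulmx (holomorphic_on_continuous holo_phi regular_z).
  exact: mx_continuous_adjmx (holomorphic_on_continuous holo_psi regular_z).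
move=> d d_gt0; pose t := Num.min d r / 2%:R.
have t_gt0 : 0 < t by rewrite divr_gt0 // lt_min d_gt0.
have [t_lt_d t_lt_r] : t < d /\ t < r.
  have : Num.min d r <= d /\ Num.min d r <= r by rewrite !ge_min !lexx orbT.
  by rewrite /t; lra.
pose w := complex.Re z +i* t.
have wz : normc (w - z) = t.
  have z_real : z = (complex.Re z)%:C by move: Imz0; case: (z) => x y /= ->.
  by rewrite /w {2}z_real normc_vertical // ltW.
exists w; first by rewrite wz.
have Imw_neq0 : complex.Im w != 0 by rewrite /w /= gt_eqF.
have Dw : ~ D w by apply: noD; rewrite wz t_gt0 t_lt_r.
exact: stieltjes_mxRe_psd_offaxis Imw_neq0 Rez_lt_alpha Dw.
Qed.

End StieltjesPair.

Theorem lemma10p13 (R : realType) (alpha : R) (q : nat)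
    (phi psi : R[i] -> 'M[R[i]]_q) :
  stieltjes_pair alpha phi psi ->
  exists D : R[i] -> Prop,
    stieltjes_conds alpha phi psi D /\
    (* (iv) *)
    (forall z : R[i], complex.Im z != 0 -> ~ D z ->
       psd ((complex.Im z)%:C^-1 *: mxIm (adjmx (psi z) *m phi z))) /\
    (* (v) *)
    (forall z : R[i], complex.Im z != 0 -> ~ D z ->
       psd ((complex.Im z)%:C^-1 *: mxIm ((z - alpha%:C) *: (adjmx (psi z) *m phi z)))) /\
    (* (vi) *)
    (forall z : R[i], complex.Re z < alpha -> ~ D z ->
       psd (mxRe (adjmx (psi z) *m phi z))).
Proof.
move=> [_ [_ [D conds]]]; exists D; split; first exact: conds.
split; first exact: stieltjes_mxIm_psd conds.
split; first exact: stieltjes_shifted_mxIm_psd conds.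
exact: stieltjes_mxRe_psd conds.
Qed.
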